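(* A linear operator $T:\mathbb C[z]\to\mathbb C[z]$ preserves stability (i.e. $T(\mathcal H_1(\mathbb C))\subseteq\mathcal H_1(\mathbb C)\cup\{0\}$) if and only if either (a) $T$ has range of dimension at most one and $T(f)=\alpha(f)P$ for $f\in\mathbb C[z]$, where $\alpha:\mathbb C[z]\to\mathbb C$ is a linear functional and $P\in\mathcal H_1(\mathbb C)$; or (b) $T[(z+w)^n]\in\mathcal H_2(\mathbb C)\cup\{0\}$ for all $n\in\mathbb N$.
   Context: A polynomial $f\in\mathbb C[z_1,\dots,z_k]$ is stable if it is non-zero and $f(z_1,\dots,z_k)\neq0$ whenever $\Im z_j>0$ for all $j$; $\mathcal H_k(\mathbb C)$ is the set of stable polynomials in $k$ variables. $T$ is extended to polynomials in $z,w$ by $T(z^kw^\ell)=T(z^k)w^\ell$. *)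

From HB Require Import structures.
From mathcomp Require Import all_boot all_order all_algebra.
From mathcomp Require Import reals.
From mathcomp Require Import complex.
Set Implicit Arguments. Unset Strict Implicit. Unset Printing Implicit Defensive.
Import Order.TTheory GRing.Theory Num.Theory.
Local Open Scope ring_scope.

Definition stable1 (R : realType) (f : {poly R[i]}) : Prop :=
  f != 0 /\ forall z : R[i], 0 < complex.Im z -> f.[z] != 0.

(* Bivariate polynomials in z, w are represented as {poly {poly C}}:
   outer variable w, coefficients polynomials in z.  p(z,w) = (p.[w%:P]).[z]. *)
Definition eval2 (R : realType) (p : {poly {poly R[i]}}) (z w : R[i]) : R[i] :=
  (p.[w%:P]).[z].

Definition stable2 (R : realType) (p : {poly {poly R[i]}}) : Prop :=
  p != 0 /\ forall z w : R[i], 0 < complex.Im z -> 0 < complex.Im w ->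
    eval2 p z w != 0.

Definition zw_pow (R : realType) (n : nat) : {poly {poly R[i]}} :=
  (('X)%:P + 'X) ^+ n.

(* Extension of T to C[z,w]: T(z^k w^l) = T(z^k) w^l, i.e. T acts on the
   z-polynomial coefficients of each power of w. *)
Definition extT (R : realType) (T : {poly R[i]} -> {poly R[i]})
  (p : {poly {poly R[i]}}) : {poly {poly R[i]}} := map_poly T p.

From HB Require Import structures.
From mathcomp Require Import all_boot all_order all_algebra.
From mathcomp Require Import reals.
From mathcomp Require Import complex.
From mathcomp Require Import ring lra.
From Stdlib Require Import Classical.
Import Order.TTheory GRing.Theory Num.Theory.
Import Normc.
Local Open Scope ring_scope.

(* For [w_1, ..., w_k] in the upper half-plane, [prod_j (z + w_j)] arises from
   [(z + w)^k] by [k] polar derivatives in [w], which preserve stability in [w] (Laguerre); as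
   [T] acts on [z] only, stability of [T[(z + w)^k]] yields that of [T (prod_j (z + w_j))].
   A stable [f] is the limit of such products [f(z + i e)], [e -> 0+], and the estimate
   [|q^(k)(z0)| <= M^(deg q) |q(z0)|], valid for stable [q] and upper [z0], rules out an upper
   root of [T f] in the limit.  If [T] has rank at most one, then [T f = alpha(f) P] with [P = T(z^k)] stable.
   Otherwise [T[(z + w)^N]] has no upper zero [w] once [N] is large: such a zero makes [T g]
   stable or [0] whenever [deg g <= N] (as [(z + w)^N + e g] is stable for small [e]), and then
   any two such images are proportional, a suitable combination vanishing at [i].  So every
   upper slice [w |-> T[(z + w)^N](z)] is zero-free, Gauss-Lucas in [w] passes this down to
   each power [n], and a slice of [T[(z + w)^n]] with an upper zero vanishes identically,
   which forces [T[(z + w)^n] = 0]. *)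

Section PolyFacts.
Context {K : comNzRingType}.

Lemma horner_drop_poly1 (p : {poly K}) (x : K) : p.[x] = p`_0 + x * (drop_poly 1 p).[x].
Proof.
rewrite -{1}(poly_take_drop 1 p) hornerD hornerM hornerX mulrC; congr (_ + _).
suff -> : take_poly 1 p = (p`_0)%:P by rewrite hornerC.
by apply/polyP => -[|i]; rewrite coef_take_poly coefC.
Qed.

Lemma derivnS_XsubC_mul (p : {poly K}) (r : K) j :
  (('X - r%:P) * p)^`(j.+1) = ('X - r%:P) * p^`(j.+1) + p^`(j) *+ j.+1.
Proof.
elim: j => [|j IH]; first by rewrite derivn1 derivM derivXsubC mul1r derivn0 addrC.
rewrite derivnS IH derivD derivM derivXsubC mul1r derivMn -!derivnS.
by rewrite (mulrS _ j.+1) [p^`(j.+1) + _]addrC addrA.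
Qed.

Lemma comp_prod_XsubC (rs : seq K) (h : K) :
  (\prod_(r <- rs) ('X - r%:P)) \Po ('X + h%:P) = \prod_(r <- rs) ('X + (h - r)%:P).
Proof.
elim: rs => [|r rs IH]; first by rewrite !big_nil -polyC1 comp_polyC.
by rewrite !big_cons comp_polyM IH comp_polyB comp_polyX comp_polyC polyCB addrA.
Qed.

Lemma size_sum_scale_le (n : nat) (c : nat -> K) (P : nat -> {poly K}) :
  (size (\sum_(j < n) c j *: P j)%R <= \max_(j < n) size (P j))%N.
Proof.
apply: leq_trans (size_sum _ _ _) _; apply/bigmax_leqP => j _.
apply: leq_trans (size_scale_leq _ _) _; exact: (@leq_bigmax _ (fun j : 'I_n => size (P j)) j).
Qed.

Lemma derivn_size_pred (q : {poly K}) : q != 0 ->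
  q^`((size q).-1) = (lead_coef q *+ ((size q).-1)`!)%:P.
Proof.
move=> q0; apply/polyP => -[|i]; rewrite coef_derivn coefC /=.
  by rewrite addn0 ffactnn lead_coefE.
rewrite nth_default ?mul0rn //.
by move: (size_poly_gt0 q); rewrite q0; case: (size q) => //= n _; rewrite addnS ltnS leq_addr.
Qed.

End PolyFacts.

Section UpperHalfPlane.
Context {R : realType}.
Local Notation C := R[i].
Local Notation Re := complex.Re.
Local Notation Im := complex.Im.
Implicit Types (x y u v w z : C) (p q : {poly C}).

Lemma ReD x y : Re (x + y) = Re x + Re y. Proof. by case: x y => ? ? [? ?]. Qed.
Lemma ImD x y : Im (x + y) = Im x + Im y. Proof. by case: x y => ? ? [? ?]. Qed.
Lemma ImB x y : Im (x - y) = Im x - Im y. Proof. by case: x y => ? ? [? ?]. Qed.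
Lemma ReM x y : Re (x * y) = Re x * Re y - Im x * Im y.
Proof. by case: x y => ? ? [? ?]. Qed.
Lemma ImM x y : Im (x * y) = Re x * Im y + Im x * Re y.
Proof. by case: x y => ? ? [? ?]. Qed.
Lemma natr_real n : (n%:R : C) = real_complex R n%:R.
Proof. by rewrite rmorph_nat. Qed.

(* The closed disc of centre [-i k / 2a] and radius [k / 2a]. *)
Definition in_disc (a k : R) x := a * (Re x ^+ 2 + Im x ^+ 2) + k * Im x <= 0.

Lemma in_disc_Im_le0 [a k x] : 0 < a -> 0 <= k -> in_disc a k x -> Im x <= 0.
Proof.
rewrite /in_disc => a0 k0 hx; rewrite leNgt; apply/negP => xi0.
have : 0 < a * (Re x ^+ 2 + Im x ^+ 2).
  by rewrite mulr_gt0 // ltr_wpDl ?sqr_ge0 // exprn_gt0.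
have : 0 <= k * Im x by rewrite mulr_ge0 // ltW.
lra.
Qed.

Lemma in_disc_inv [a u] : 0 < a -> a <= Im u -> in_disc a 1 u^-1 /\ Im u^-1 < 0.
Proof.
move=> a0 aIu; have u0 : u != 0 by apply: contraTneq aIu => ->; rewrite -ltNge.
have := ReM u^-1 u; have := ImM u^-1 u; rewrite mulVf //= /in_disc.
move: (Re u) (Im u) (Re u^-1) (Im u^-1) aIu => ur ui zr zi aui h2 h1.
have N0 : 0 < ur ^+ 2 + ui ^+ 2 by rewrite ltr_wpDl ?sqr_ge0 ?exprn_gt0 ?(lt_le_trans a0).
have e1 : (ur ^+ 2 + ui ^+ 2) * zi = - ui.
  have -> : (ur ^+ 2 + ui ^+ 2) * zi = ur * (zr * ui + zi * ur) - ui * (zr * ur - zi * ui) by ring.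
  by rewrite -h1 -h2; ring.
have e2 : (ur ^+ 2 + ui ^+ 2) * (zr ^+ 2 + zi ^+ 2) = 1.
  have -> : (ur ^+ 2 + ui ^+ 2) * (zr ^+ 2 + zi ^+ 2) =
    (zr * ur - zi * ui) ^+ 2 + (zr * ui + zi * ur) ^+ 2 by ring.
  by rewrite -h1 -h2; ring.
split; first by rewrite -(pmulr_rle0 _ N0) mulrDr mulrCA e2 mul1r e1; lra.
by rewrite -(pmulr_rlt0 _ N0) e1 oppr_lt0 (lt_le_trans a0).
Qed.

(* Cauchy-Schwarz in the form [|z + x|^2 <= (1 + k) (|z|^2 + |x|^2 / k)]. *)
Lemma in_discD a k z x : 0 < a -> 0 <= k ->
  in_disc a 1 z -> in_disc a k x -> in_disc a (k + 1) (z + x).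
Proof.
rewrite /in_disc ReD ImD => a0 k0; move: (Re z) (Im z) (Re x) (Im x) => zr zi xr xi hz hx.
rewrite mul1r in hz.
have [k_eq0|kp] := eqVneq k 0.
  rewrite k_eq0 mul0r addr0 in hx; rewrite k_eq0 add0r.
  have : xr ^+ 2 + xi ^+ 2 == 0.
    by rewrite eq_le addr_ge0 ?sqr_ge0 // andbT -(pmulr_rle0 _ a0).
  rewrite paddr_eq0 ?sqr_ge0 // !sqrf_eq0 => /andP [/eqP -> /eqP ->].
  by rewrite !addr0 mul1r.
have kpos : 0 < k by rewrite lt_def kp k0.
have h2 : 0 <= a * ((k * zr - xr) ^+ 2 + (k * zi - xi) ^+ 2).
  by rewrite mulr_ge0 ?addr_ge0 ?sqr_ge0 // ltW.
have h3 : k * (k + 1) * (a * (zr ^+ 2 + zi ^+ 2) + zi) <= 0.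
  by rewrite pmulr_rle0 // mulr_gt0 // ltr_wpDl.
have h4 : (k + 1) * (a * (xr ^+ 2 + xi ^+ 2) + k * xi) <= 0.
  by rewrite pmulr_rle0 // ltr_wpDl.
rewrite -(pmulr_rle0 _ kpos).
have -> : k * (a * ((zr + xr) ^+ 2 + (zi + xi) ^+ 2) + (k + 1) * (zi + xi)) =
  k * (k + 1) * (a * (zr ^+ 2 + zi ^+ 2) + zi) + (k + 1) * (a * (xr ^+ 2 + xi ^+ 2) + k * xi)
  - a * ((k * zr - xr) ^+ 2 + (k * zi - xi) ^+ 2) by ring.
lra.
Qed.

(* If [v x = -n] then [x = -n / v] and membership in the disc reads [n^2 (a + Im v) <= 0]. *)
Lemma in_disc_mul_neqN [a k n v x] : 0 < a -> 0 < a + Im v -> (0 < n)%N ->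
  0 <= k <= n%:R -> in_disc a k x -> v * x != - n%:R.
Proof.
move=> a0 av n0 /andP [k0 kn] hx; apply/eqP => hvx.
have xi0 := in_disc_Im_le0 a0 k0 hx.
have := ReM v x; have := ImM v x; rewrite hvx natr_real /= oppr0.
move: hx xi0; rewrite /in_disc; move: (Re v) (Im v) (Re x) (Im x) av => vr vi xr xi av hx xi0 h2 h1.
have hxn : a * (xr ^+ 2 + xi ^+ 2) + n%:R * xi <= 0.
  have : (n%:R - k) * xi <= 0 by rewrite mulr_ge0_le0 // subr_ge0.
  lra.
have e1 : (vr ^+ 2 + vi ^+ 2) * xi = n%:R * vi.
  have -> : (vr ^+ 2 + vi ^+ 2) * xi = vr * (vr * xi + vi * xr) - vi * (vr * xr - vi * xi) by ring.
  by rewrite -h1 -h2; ring.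
have e2 : (vr ^+ 2 + vi ^+ 2) * (xr ^+ 2 + xi ^+ 2) = n%:R ^+ 2.
  have -> : (vr ^+ 2 + vi ^+ 2) * (xr ^+ 2 + xi ^+ 2) =
    (vr * xr - vi * xi) ^+ 2 + (vr * xi + vi * xr) ^+ 2 by ring.
  by rewrite -h1 -h2; ring.
have : (vr ^+ 2 + vi ^+ 2) * (a * (xr ^+ 2 + xi ^+ 2) + n%:R * xi) <= 0.
  by rewrite mulr_ge0_le0 ?addr_ge0 ?sqr_ge0.
have -> : (vr ^+ 2 + vi ^+ 2) * (a * (xr ^+ 2 + xi ^+ 2) + n%:R * xi) =
   a * ((vr ^+ 2 + vi ^+ 2) * (xr ^+ 2 + xi ^+ 2)) + n%:R * ((vr ^+ 2 + vi ^+ 2) * xi) by ring.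
rewrite e1 e2; have : 0 < n%:R ^+ 2 * (a + vi) :> R by rewrite mulr_gt0 ?exprn_gt0 ?ltr0n.
nra.
Qed.

Lemma logderiv_prod_XsubC [rs : seq C] [w] : 0 < Im w -> all (fun r => Im r <= 0) rs ->
  (\prod_(r <- rs) ('X - r%:P)).[w] != 0 /\
  exists2 x, (\prod_(r <- rs) ('X - r%:P))^`().[w] = x * (\prod_(r <- rs) ('X - r%:P)).[w]
    & in_disc (Im w) (size rs)%:R x /\ (rs != [::] -> Im x < 0).
Proof.
move=> w0; elim: rs => [|r rs IH] /=.
  move=> _; rewrite big_nil hornerC oner_eq0; split => //; exists 0.
    by rewrite -polyC1 derivC horner0 mul0r.
  by split; rewrite // /in_disc /= expr0n /= addr0 !mulr0 addr0.
case/andP=> hr /IH [pw [x hx [hxd _]]]; rewrite big_cons.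
set q := \prod_(_ <- _) _ in pw hx *; set u := w - r.
have uI : Im w <= Im u by rewrite /u ImB; lra.
have u0 : u != 0 by apply: contraTneq uI => ->; rewrite -ltNge.
have hpw : (('X - r%:P) * q).[w] = u * q.[w] by rewrite hornerM hornerXsubC.
split; first by rewrite hpw mulf_neq0.
have [zd zneg] := in_disc_inv w0 uI.
exists (u^-1 + x).
  by rewrite derivM derivXsubC mul1r hornerD hornerM hornerXsubC hx hpw -/u; field.
split; first by rewrite -addn1 natrD; apply: in_discD.
by move=> _; rewrite ImD; have := in_disc_Im_le0 w0 (ler0n _ _) hxd; lra.
Qed.

Definition uhp_zero_free p := forall z, 0 < Im z -> p.[z] != 0.

Lemma uhp_zero_free_neq0 [p] : uhp_zero_free p -> p != 0.
Proof. by move=> hp; apply: contraTneq (hp 'i%C ltr01) => ->; rewrite horner0 eqxx. Qed.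

Lemma stable1E p : stable1 p <-> uhp_zero_free p.
Proof. by split=> [[]//|hp]; split; [apply: uhp_zero_free_neq0|]. Qed.

Lemma stable1_XaddC_exp [w : C] n : 0 <= Im w -> stable1 (('X + w%:P) ^+ n).
Proof.
move=> hw; apply/stable1E => z hz; rewrite horner_exp hornerD hornerX hornerC expf_neq0 //.
by apply: contraTneq hz => /(congr1 (@complex.Im R)); rewrite ImD /= -leNgt => ?; lra.
Qed.

Lemma uhp_zero_free_factor [p] : uhp_zero_free p ->
  exists rs, [/\ p = lead_coef p *: \prod_(r <- rs) ('X - r%:P),
     all (fun r => Im r <= 0) rs & size rs = (size p).-1].
Proof.
move=> hp; have [rs hrs] := closed_field_poly_normal p.
have lc0 : lead_coef p != 0 by rewrite lead_coef_eq0 uhp_zero_free_neq0.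
exists rs; split => //; last by rewrite hrs size_scale // size_prod_XsubC.
apply/allP => r rin; rewrite leNgt; apply/negP => /hp.
by rewrite hrs hornerZ horner_prod (big_rem r rin) /= hornerXsubC subrr mul0r mulr0 eqxx.
Qed.

Lemma uhp_eq0 q : (forall w, 0 < Im w -> q.[w] = 0) -> q = 0.
Proof.
move=> hq; apply: (@roots_geq_poly_eq0 _ _ (mkseq (fun k => Complex 0 k.+1%:R) (size q))).
- by apply/allP => _ /mapP [k _ ->]; apply/rootP/hq; rewrite /= ltr0n.
- by rewrite map_inj_uniq ?iota_uniq // => a b [] /eqP; rewrite eqr_nat => /eqP [].
- by rewrite size_mkseq.
Qed.

Lemma taylor_shift p (h : C) : p \Po ('X + h%:P) = \sum_(j < size p) h ^+ j *: p^`N(j).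
Proof.
apply/eqP; rewrite -subr_eq0; apply/eqP; apply: uhp_eq0 => x _.
rewrite hornerD hornerN horner_comp hornerD hornerX hornerC.
rewrite (nderiv_taylor _ (mulrC x h)) horner_sum -sumrB big1 // => j _.
by rewrite hornerZ mulrC subrr.
Qed.

Lemma mulrSn_eq0 m q : q *+ m.+1 = 0 -> q = 0.
Proof. by rewrite -scaler_nat => /eqP; rewrite scaler_eq0 pnatr_eq0 => /eqP. Qed.

Lemma uhp_zero_free_mulrSn m q : uhp_zero_free (q *+ m.+1) -> uhp_zero_free q.
Proof. by move=> hq z /hq; rewrite hornerMn; apply: contraNneq => ->; rewrite mul0rn. Qed.

(* Laguerre: the polar derivative of [p], viewed as of degree [n], with respect to an upper [w']. *)
Lemma laguerre_uhp p (n : nat) w' : (0 < n)%N -> (size p <= n.+1)%N ->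
  0 < Im w' -> uhp_zero_free p -> uhp_zero_free (n%:R *: p + (w'%:P - 'X) * p^`()).
Proof.
move=> n0 sp w'0 hp w w0.
have [rs [hrs hall hsz]] := uhp_zero_free_factor hp.
have c0 : lead_coef p != 0 by rewrite lead_coef_eq0 uhp_zero_free_neq0.
have [qw [x hx [hxd _]]] := logderiv_prod_XsubC w0 hall.
rewrite hrs derivZ hornerD hornerM !hornerZ hx hornerD hornerC hornerN hornerX.
set c := lead_coef p; set q := \prod_(_ <- _) _ in qw *.
have -> : n%:R * (c * q.[w]) + (w' - w) * (c * (x * q.[w])) =
   c * q.[w] * (n%:R + (w' - w) * x) by ring.
rewrite !mulf_neq0 // addrC addr_eq0.
apply: (in_disc_mul_neqN w0 _ n0 _ hxd); first by rewrite ImB; lra.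
by rewrite ler0n ler_nat hsz -subn1 leq_subLR add1n.
Qed.

Lemma gauss_lucas_uhp p : uhp_zero_free p -> p^`() = 0 \/ uhp_zero_free p^`().
Proof.
move=> hp; have [rs [hrs hall _]] := uhp_zero_free_factor hp.
have c0 : lead_coef p != 0 by rewrite lead_coef_eq0 uhp_zero_free_neq0.
case: rs hall hrs => [|r rs] hall hrs.
  by left; rewrite hrs big_nil derivZ -polyC1 derivC scaler0.
right => w w0; have [qw [x hx [_ hneg]]] := logderiv_prod_XsubC w0 hall.
rewrite hrs derivZ hornerZ hx !mulf_neq0 //.
by apply: contraTneq (hneg isT) => ->; rewrite ltxx.
Qed.

End UpperHalfPlane.

Section Bounds.
Context {R : realType}.
Local Notation C := R[i].
Local Notation Im := complex.Im.
Implicit Types (x z : C) (p q : {poly C}).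

Lemma normc_ge0 x : 0 <= normc x.
Proof. by case: x => ? ?; apply: sqrtr_ge0. Qed.

Lemma normcX x n : normc (x ^+ n) = normc x ^+ n.
Proof. by elim: n => [|n IH]; rewrite ?normc1 // !exprS normcM IH. Qed.

Lemma Im_le_normc x : Im x <= normc x.
Proof.
case: x => a b /=; apply: le_trans (ler_norm b) _.
by rewrite -sqrtr_sqr ler_sqrt ?addr_ge0 ?sqr_ge0 // lerDr sqr_ge0.
Qed.

Lemma normc_iy (e : R) : 0 <= e -> normc (Complex 0 e) = e.
Proof. by move=> e0; rewrite /= expr0n /= add0r sqrtr_sqr ger0_norm. Qed.

Lemma normc_sum [I : Type] (r : seq I) (F : I -> C) :
  normc (\sum_(i <- r) F i) <= \sum_(i <- r) normc (F i).
Proof.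
elim: r => [|i r IH]; first by rewrite !big_nil normc0.
by rewrite !big_cons (le_trans (le_normcD _ _)) ?lerD2l.
Qed.

Lemma normc_horner_le [p] [m : nat] [z] [L : R] : (size p <= m.+1)%N ->
  1 <= L -> normc z <= L -> normc p.[z] <= (\sum_(i < m.+1) normc p`_i) * L ^+ m.
Proof.
move=> sp L1 zL; rewrite (horner_coef_wide _ sp) mulr_suml.
apply: le_trans (normc_sum _ _) _; apply: ler_sum => i _.
rewrite normcM normcX ler_wpM2l ?normc_ge0 //.
apply: le_trans (ler_weXn2l L1 (ltnSE (ltn_ord i))).
by rewrite lerXn2r ?nnegrE ?normc_ge0 // (le_trans ler01).
Qed.

(* Each linear factor [z - r] has modulus at least [Im z], which pays for one differentiation. *)
Lemma normc_derivn_prod_le [rs : seq C] [z] [k : nat] : 0 < Im z -> all (fun r => Im r <= 0) rs ->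
  forall j, (j <= k)%N -> normc (\prod_(r <- rs) ('X - r%:P))^`(j).[z] <=
    (1 + k%:R / Im z) ^+ size rs * normc (\prod_(r <- rs) ('X - r%:P)).[z].
Proof.
set M := 1 + k%:R / Im z => z0; have M1 : 1 <= M by rewrite lerDl divr_ge0 // ltW.
elim: rs => [_ [|j] _ |r rs IH /andP [hr /IH {}IH] j hj].
- by rewrite derivn0 expr0 mul1r.
- rewrite big_nil -polyC1 derivnC horner0 normc0.
  by rewrite mulr_ge0 ?normc_ge0 ?exprn_ge0 ?(le_trans ler01).
rewrite big_cons; set p := \prod_(_ <- _) _ in IH *; set E := M ^+ size rs * normc p.[z] in IH.
case: j hj => [|j] hj; first by rewrite derivn0 ler_peMl ?normc_ge0 // exprn_ege1.
rewrite derivnS_XsubC_mul hornerD !hornerM hornerXsubC hornerMn.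
set d := normc (z - r).
have hd : Im z <= d by apply: le_trans (Im_le_normc _); rewrite ImB; lra.
have E0 : 0 <= E by rewrite mulr_ge0 ?normc_ge0 ?exprn_ge0 ?(le_trans ler01).
have h1 : d * normc p^`(j.+1).[z] <= d * E by rewrite ler_wpM2l ?normc_ge0 ?IH.
have h2 : normc p^`(j).[z] *+ j.+1 <= E * (d * (k%:R / Im z)).
  rewrite -[_ *+ j.+1]mulr_natr ler_pM ?normc_ge0 ?ler0n ?IH 1?ltnW //.
  rewrite mulrA ler_pdivlMr // [d * _]mulrC.
  by rewrite ler_pM ?ler0n ?ler_nat // ltW.
apply: le_trans (le_normcD _ _) _; rewrite !normcM normcMn -/d.
have -> : M ^+ size (r :: rs) * (d * normc p.[z]) = d * E + E * (d * (k%:R / Im z)).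
  by rewrite /E /M exprS; ring.
exact: lerD.
Qed.

Lemma normc_derivn_le q z (k : nat) : 0 < Im z -> q = 0 \/ uhp_zero_free q ->
  normc (q^`(k)).[z] <= (1 + k%:R / Im z) ^+ size q * normc q.[z].
Proof.
move=> z0 [->|hq]; first by rewrite derivn_poly0 ?size_poly0 // !horner0 normc0 mulr0.
have [rs [hrs hall hsz]] := uhp_zero_free_factor hq.
have M1 : 1 <= 1 + k%:R / Im z by rewrite lerDl divr_ge0 // ltW.
rewrite hrs derivnZ !hornerZ !normcM mulrCA ler_wpM2l ?normc_ge0 //.
apply: le_trans (normc_derivn_prod_le z0 hall k (leqnn k)) _.
by rewrite ler_wpM2r ?normc_ge0 // ler_weXn2l // hsz -hrs leq_pred.
Qed.

(* On the imaginary axis near [0], [|A| <= e * c_A] while [|B|] stays close to [|B(0)| > 0]. *)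
Lemma not_dominated_near0 (A B : {poly C}) (K : R) : A.[0] = 0 -> B.[0] != 0 -> 0 <= K ->
  ~ (forall e : R, 0 < e <= 1 ->
       normc B.[Complex 0 e] <= K * normc A.[Complex 0 e]).
Proof.
pose c p := \sum_(i < (size p).+1) normc (drop_poly 1 p)`_i.
have c0 p : 0 <= c p by rewrite sumr_ge0 // => i _; apply: normc_ge0.
have near0 p e : 0 <= e -> e <= 1 -> normc (p.[Complex 0 e] - p`_0) <= e * c p.
  move=> e0 e1; rewrite horner_drop_poly1 addrC addKr normcM normc_iy // ler_wpM2l //.
  rewrite -[c p]mulr1 -(expr1n _ (size p)) normc_horner_le ?normc_iy //.
  by rewrite size_drop_poly (leq_trans (leq_subr _ _)).
rewrite !horner_coef0 => A0 B0 K0 hK.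
have nB : 0 < normc B`_0 by rewrite lt_def normc_ge0 andbT; apply: contra B0 => /eqP/eq0_normc ->.
pose X := 2 * (c B + K * c A + 1).
have X0 : 0 < X by rewrite mulr_gt0 // ltr_wpDl ?addr_ge0 ?mulr_ge0.
pose e := normc B`_0 / (X + normc B`_0).
have e0 : 0 < e by rewrite divr_gt0 ?addr_gt0.
have e1 : e <= 1 by rewrite ler_pdivrMr ?addr_gt0 // mul1r lerDr ltW.
have eX : e * (X + normc B`_0) = normc B`_0 by rewrite mulfVK // gt_eqF ?addr_gt0.
have hA := near0 A e (ltW e0) e1; have hB := near0 B e (ltW e0) e1.
have := hK e; rewrite e0 e1 => /(_ isT); rewrite A0 subr0 in hA.
have hB0 : normc B`_0 <= normc B.[Complex 0 e] + normc (B.[Complex 0 e] - B`_0).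
  rewrite {1}(_ : B`_0 = B.[Complex 0 e] - (B.[Complex 0 e] - B`_0)).
    by rewrite (le_trans (le_normcD _ _)) // normcN.
  by rewrite opprB addrC subrK.
have : K * normc A.[Complex 0 e] <= K * (e * c A) by rewrite ler_wpM2l.
rewrite /X in eX; nra.
Qed.

(* On the upper half-plane [|z + w0| > Im w0], so [|g(z)| <= S (K |z + w0|)^m] for a constant
   [K], and a small enough [e] keeps [e g(z)] below [(z + w0)^m]. *)
Lemma uhp_zero_free_perturb [g : {poly C}] [w0 : C] [m : nat] : 0 < Im w0 ->
  (size g <= m.+1)%N -> exists2 e : C, e != 0 & uhp_zero_free (('X + w0%:P) ^+ m + e *: g).
Proof.
move=> hw sg; set b := Im w0 in hw; set nw := normc w0.
pose S := \sum_(i < m.+1) normc g`_i.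
have S0 : 0 <= S by rewrite sumr_ge0 // => i _; apply: normc_ge0.
have nw0 : 0 <= nw by apply: normc_ge0.
pose K := (1 + b + nw) / b.
have K0 : 0 < K by rewrite divr_gt0 //; lra.
pose e := (S * K ^+ m + 1)^-1.
have SK0 : 0 <= S * K ^+ m by rewrite mulr_ge0 // exprn_ge0 // ltW.
have e0 : 0 < e by rewrite invr_gt0 ltr_wpDl.
exists (Complex e 0); first by apply: contraTneq e0 => -[->]; rewrite ltxx.
move=> z hz; rewrite hornerD hornerZ horner_exp hornerD hornerX hornerC.
set u := z + w0.
have U0 : b <= normc u by apply: le_trans (Im_le_normc _); rewrite /u ImD; lra.
have [KU1 KUz] : 1 <= K * normc u /\ normc z <= K * normc u.
  have e1 : K * normc u - (1 + normc u + nw) = (normc u - b) * (1 + nw) / b.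
    by rewrite /K; field; rewrite lt0r_neq0.
  have e2 : 0 <= (normc u - b) * (1 + nw) / b.
    by rewrite divr_ge0 ?mulr_ge0 ?subr_ge0 ?addr_ge0 // ltW.
  have hz' : normc z <= normc u + nw.
    by rewrite -[z](addrK w0) -/u (le_trans (le_normcD _ _)) // normcN.
  by have := normc_ge0 u; split; lra.
have hg := normc_horner_le sg KU1 KUz.
apply/eqP => /eqP; rewrite addr_eq0 => /eqP /(congr1 (@normc R)).
rewrite normcN normcX normcM /= expr0n /= addr0 sqrtr_sqr ger0_norm ?(ltW e0) //.
have Um : 0 < normc u ^+ m by rewrite exprn_gt0 // (lt_le_trans hw U0).
have eS : e * (S * K ^+ m) = 1 - e by rewrite /e; field; rewrite lt0r_neq0 //; lra.
have : e * normc g.[z] <= e * (S * (K ^+ m * normc u ^+ m)).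
  by rewrite ler_wpM2l ?(ltW e0) // -exprMn.
have -> : e * (S * (K ^+ m * normc u ^+ m)) = (e * (S * K ^+ m)) * normc u ^+ m by ring.
by rewrite eS; move: Um; set X := normc u ^+ m; nra.
Qed.

End Bounds.

Section Bivariate.
Context {R : realType}.
Local Notation C := R[i].
Local Notation Im := complex.Im.
Implicit Types (z w : C) (F : {poly {poly C}}).

Definition zslice z F : {poly C} := map_poly (horner_eval z) F.

Lemma eval2_zslice F z w : eval2 F z w = (zslice z F).[w].
Proof. by have := horner_map (horner_eval z) F w%:P; rewrite /= !horner_evalE hornerC => ->. Qed.

Lemma zsliceC z (q : {poly C}) : zslice z q%:P = q.[z]%:P.
Proof. exact: map_polyC. Qed.

Lemma size_zslice z F : (size (zslice z F) <= size F)%N.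
Proof. exact: size_poly. Qed.

Lemma poly2_eq0_uhp F : (forall w, 0 < Im w -> F.[w%:P] = 0) -> F = 0.
Proof.
move=> hF; apply/polyP => i; rewrite coef0; apply: uhp_eq0 => z _.
have hz : zslice z F = 0.
  by apply: uhp_eq0 => w hw; rewrite -eval2_zslice /eval2 hF // horner0.
by have := congr1 (fun q : {poly C} => q`_i) hz; rewrite coef_map /= horner_evalE coef0.
Qed.

Lemma deriv_zw_pow m : (zw_pow R m.+1)^`() = zw_pow R m *+ m.+1.
Proof. by rewrite /zw_pow deriv_exp derivD derivC derivX add0r mul1r. Qed.

Lemma size_zw_pow m : (size (zw_pow R m) <= m.+1)%N.
Proof.
apply: leq_trans (size_poly_exp_leq _ _) _.
by rewrite addrC size_XaddC mul1n.
Qed.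

Definition prodXaddC (s : seq C) : {poly C} := \prod_(w <- s) ('X + w%:P).

Definition zw_prod (s : seq C) m : {poly {poly C}} := (prodXaddC s)%:P * zw_pow R m.

Lemma size_zw_prod s m : (size (zw_prod s m) <= m.+1)%N.
Proof. by rewrite /zw_prod mul_polyC (leq_trans (size_scale_leq _ _)) ?size_zw_pow. Qed.

(* [(z + w') (z + w)^m = (z + w)^(m+1) + (w' - w) (z + w)^m], the last power being
   [1/(m+1)] times a [w]-derivative. *)
Lemma zw_prod_cons w' s m : zw_prod (w' :: s) m *+ m.+1 =
  zw_prod s m.+1 *+ m.+1 + ((w'%:P)%:P - 'X) * (zw_prod s m.+1)^`().
Proof.
rewrite /zw_prod derivM derivC mul0r add0r deriv_zw_pow mulrnAr /prodXaddC big_cons.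
rewrite polyCM polyCD; move: (\prod_(_ <- _) _)%:P => Q.
by rewrite /zw_pow exprS mulrnAr -mulrnDl; congr (_ *+ _); ring.
Qed.

End Bivariate.

Section Symbol.
Context {R : realType}.
Local Notation C := R[i].
Local Notation Im := complex.Im.
Context {T : {linear {poly C} -> {poly C}}}.
Implicit Types (z w : C) (f g p q : {poly C}) (F : {poly {poly C}}).

Lemma size_extT F : (size (extT T F) <= size F)%N.
Proof. exact: size_poly. Qed.

Lemma extTD F G : extT T (F + G) = extT T F + extT T G. Proof. exact: raddfD. Qed.
Lemma extTB F G : extT T (F - G) = extT T F - extT T G. Proof. exact: raddfB. Qed.
Lemma extTMn F n : extT T (F *+ n) = extT T F *+ n. Proof. exact: raddfMn. Qed.

Lemma extT_C q : extT T q%:P = (T q)%:P.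
Proof. by rewrite /extT map_polyC. Qed.

Lemma extT_mulX F : extT T ('X * F) = 'X * extT T F.
Proof.
apply/polyP => i; rewrite coef_map_id0 ?linear0 // !coefXM.
by case: (i == 0)%N; rewrite ?linear0 ?coef_map_id0 ?linear0.
Qed.

Lemma extT_mulCC (c : C) F : extT T (c%:P%:P * F) = c%:P%:P * extT T F.
Proof.
apply/polyP => i; rewrite coef_map_id0 ?linear0 // !coefCM coef_map_id0 ?linear0 //.
by rewrite !mul_polyC linearZ.
Qed.

Lemma deriv_extT F : (extT T F)^`() = extT T F^`().
Proof.
apply/polyP => i; rewrite coef_deriv !coef_map_id0 ?linear0 // coef_deriv.
by rewrite linearMn.
Qed.

Lemma extT_horner F w : (extT T F).[w%:P] = T F.[w%:P].
Proof.
rewrite (horner_coef_wide _ (size_extT F)) horner_coef linear_sum.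
apply: eq_bigr => i _; rewrite coef_map_id0 ?linear0 // -rmorphXn /=.
by rewrite ![_ * _%:P]mulrC !mul_polyC linearZ.
Qed.

Lemma extT_zw_pow_horner n w : (extT T (zw_pow R n)).[w%:P] = T (('X + w%:P) ^+ n).
Proof. by rewrite extT_horner /zw_pow horner_exp hornerD hornerC hornerX addrC. Qed.

Lemma eval2_zw_pow n z w : eval2 (extT T (zw_pow R n)) z w = (T (('X + w%:P) ^+ n)).[z].
Proof. by rewrite /eval2 extT_zw_pow_horner. Qed.

Lemma deriv_zslice_zw_pow z m :
  (zslice z (extT T (zw_pow R m.+1)))^`() = zslice z (extT T (zw_pow R m)) *+ m.+1.
Proof. by rewrite /zslice deriv_map deriv_extT deriv_zw_pow extTMn rmorphMn. Qed.

Lemma zslice_extT_zw_prod_cons z w' s m :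
  zslice z (extT T (zw_prod (w' :: s) m)) *+ m.+1 =
  zslice z (extT T (zw_prod s m.+1)) *+ m.+1 +
    (w'%:P - 'X) * (zslice z (extT T (zw_prod s m.+1)))^`().
Proof.
rewrite /zslice -rmorphMn -extTMn zw_prod_cons extTD extTMn mulrBl extTB extT_mulCC extT_mulX.
rewrite rmorphD rmorphMn rmorphB !rmorphM /= map_polyC map_polyX /= horner_evalE hornerC.
by rewrite deriv_map deriv_extT mulrBl.
Qed.

Definition wstable F := (forall z, 0 < Im z -> zslice z F = 0) \/
  (forall z, 0 < Im z -> uhp_zero_free (zslice z F)).

Lemma wstable_symbol [n : nat] : stable2 (extT T (zw_pow R n)) \/ extT T (zw_pow R n) = 0 ->
  wstable (extT T (zw_pow R n)).
Proof.
case=> [[_ hF]|->]; last by left => z _; rewrite /zslice map_poly0.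
by right => z hz w hw; rewrite -eval2_zslice hF.
Qed.

(* Induction on [s] trades one factor [z + w'] for one polar derivative in [w] (Laguerre). *)
Lemma wstable_zw_prod [s : seq C] [m : nat] : all (fun w => 0 < Im w) s ->
  wstable (extT T (zw_pow R (size s + m))) -> wstable (extT T (zw_prod s m)).
Proof.
elim: s m => [|w' s IH] m /=; first by rewrite /zw_prod /prodXaddC big_nil mul1r.
case/andP=> hw /IH {}IH; rewrite addSnnS => /IH [h0|hzf].
  left => z hz; apply: (mulrSn_eq0 m).
  by rewrite zslice_extT_zw_prod_cons h0 // deriv0 mulr0 addr0 mul0rn.
right => z hz; apply: (uhp_zero_free_mulrSn m).
rewrite zslice_extT_zw_prod_cons -scaler_nat; apply: laguerre_uhp (hzf z hz) => //.
by rewrite (leq_trans (size_zslice _ _)) // (leq_trans (size_extT _)) ?size_zw_prod.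
Qed.

Lemma T_prodXaddC [s : seq C] : all (fun w => 0 < Im w) s -> wstable (extT T (zw_pow R (size s))) ->
  T (prodXaddC s) = 0 \/ uhp_zero_free (T (prodXaddC s)).
Proof.
move=> hs; rewrite -[size s]addn0 => /(wstable_zw_prod hs).
rewrite /zw_prod /zw_pow expr0 mulr1 extT_C.
case=> h; [left; apply: uhp_eq0 => w hw | right => w hw].
  by have /eqP := h w hw; rewrite zsliceC polyC_eq0 => /eqP.
by have := h w hw 'i%C ltr01; rewrite zsliceC hornerC.
Qed.

(* Hurwitz-type limit [e -> 0+]: if [z0] were an upper root of [T f] of degree [k], the bound
   [|q^(k)(z0)| <= M^D |q(z0)|] valid for [q := T f(. + i e)] would fail near [e = 0]. *)
Lemma T_stable_limit f :
  (forall e : R, 0 < e -> T (f \Po ('X + (Complex 0 e)%:P)) = 0 \/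
                          uhp_zero_free (T (f \Po ('X + (Complex 0 e)%:P)))) ->
  T f = 0 \/ uhp_zero_free (T f).
Proof.
move=> hshift; have [|Tf0] := eqVneq (T f) 0; [by left | right => z0 hz0].
apply/negP => /eqP hroot; set k := (size (T f)).-1.
pose M := 1 + k%:R / Im z0; have M1 : 1 <= M by rewrite lerDl divr_ge0 // ltW.
pose D := \max_(j < size f) size (T f^`N(j)).
have shiftE h : T (f \Po ('X + h%:P)) = \sum_(j < size f) h ^+ j *: T f^`N(j).
  by rewrite taylor_shift linear_sum; apply: eq_bigr => j _; rewrite linearZ.
pose A := \poly_(j < size f) (T f^`N(j)).[z0].
pose B := \poly_(j < size f) (T f^`N(j))^`(k).[z0].
have hA h : A.[h] = (T (f \Po ('X + h%:P))).[z0].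
  by rewrite horner_poly shiftE horner_sum; apply: eq_bigr => j _; rewrite hornerZ mulrC.
have hB h : B.[h] = (T (f \Po ('X + h%:P)))^`(k).[z0].
  rewrite horner_poly shiftE linear_sum horner_sum.
  by apply: eq_bigr => j _; rewrite linearZ hornerZ mulrC.
apply: (@not_dominated_near0 _ A B (M ^+ D)).
- by rewrite hA addr0 comp_polyXr.
- rewrite hB addr0 comp_polyXr derivn_size_pred // hornerC.
  by rewrite mulrn_eq0 negb_or lead_coef_eq0 Tf0 -lt0n fact_gt0.
- by rewrite exprn_ge0 // (le_trans ler01).
move=> e /andP [e0 _]; rewrite hA hB.
apply: le_trans (normc_derivn_le _ _ k hz0 (hshift e e0)) _.
rewrite ler_wpM2r ?normc_ge0 // ler_weXn2l // shiftE.
by rewrite /D; exact: (size_sum_scale_le _ (fun j => Complex 0 e ^+ j) (fun j => T f^`N(j))).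
Qed.

Lemma symbol_stable_preserves_stability :
  (forall n, stable2 (extT T (zw_pow R n)) \/ extT T (zw_pow R n) = 0) ->
  forall f, stable1 f -> stable1 (T f) \/ T f = 0.
Proof.
move=> hsym f /stable1E hf.
suff : T f = 0 \/ uhp_zero_free (T f) by case=> [|/stable1E]; [right | left].
have [rs [hrs hall _]] := uhp_zero_free_factor hf.
apply: T_stable_limit => e e0; pose s := map (fun r => Complex 0 e - r) rs.
have hs : all (fun w => 0 < Im w) s.
  by rewrite all_map; apply/allP => r /(allP hall) /= hr; rewrite ImB /=; lra.
have := T_prodXaddC hs (wstable_symbol (hsym _)).
rewrite hrs comp_polyZ comp_prod_XsubC linearZ /= /prodXaddC big_map.
case=> [->|hzf]; [by left; rewrite scaler0 | right => z hz].
by rewrite hornerZ mulf_neq0 ?hzf // lead_coef_eq0 uhp_zero_free_neq0.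
Qed.

End Symbol.

Section Necessity.
Context {R : realType}.
Local Notation C := R[i].
Local Notation Im := complex.Im.
Definition rank_le1 (T : {linear {poly C} -> {poly C}}) :=
  forall f g : {poly C}, T g = 0 \/ exists c, T f = c *: T g.

Context {T : {linear {poly C} -> {poly C}}}.
Hypothesis HT : forall f, stable1 f -> stable1 (T f) \/ T f = 0.

Lemma T_low_degree_stable [w0 : C] [m : nat] : 0 < Im w0 -> T (('X + w0%:P) ^+ m) = 0 ->
  forall g : {poly C}, (size g <= m.+1)%N -> stable1 (T g) \/ T g = 0.
Proof.
move=> hw h0 g sg; have [e e0 hzf] := uhp_zero_free_perturb hw sg.
have /stable1E /HT := hzf; rewrite linearD linearZ_LR h0 add0r.
case=> [/stable1E hst|/eqP]; last by rewrite scaler_eq0 (negbTE e0) => /eqP; right.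
left; apply/stable1E => z /hst; rewrite hornerZ; by apply: contraNneq => ->; rewrite mulr0.
Qed.

(* [T (g1 - c g2)] has the upper root [i] for a suitable [c]. *)
Lemma T_proportional [m : nat] :
  (forall g : {poly C}, (size g <= m.+1)%N -> stable1 (T g) \/ T g = 0) ->
  forall g1 g2 : {poly C}, (size g1 <= m.+1)%N -> (size g2 <= m.+1)%N ->
  T g2 = 0 \/ exists c, T g1 = c *: T g2.
Proof.
move=> hm g1 g2 s1 s2; have [|Tg2] := eqVneq (T g2) 0; [by left | right].
have /stable1E hst2 : stable1 (T g2) by case: (hm g2 s2) => // /eqP; rewrite (negbTE Tg2).
pose c := (T g1).['i] / (T g2).['i]; exists c; apply/eqP; rewrite -subr_eq0.
have sg : (size (g1 - c *: g2)%R <= m.+1)%N.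
  by rewrite (leq_trans (size_add _ _)) // geq_max s1 size_opp (leq_trans (size_scale_leq _ _)).
rewrite -linearZ_LR -linearB; case: (hm _ sg) => [/stable1E hzf|->//].
have := hzf 'i%C ltr01; rewrite linearB linearZ_LR hornerD hornerN hornerZ.
by rewrite /c mulfVK ?subrr ?eqxx // hst2 //= ltr01.
Qed.

Lemma zslice_zw_pow_pred z m :
  zslice z (extT T (zw_pow R m.+1)) = 0 \/ uhp_zero_free (zslice z (extT T (zw_pow R m.+1))) ->
  zslice z (extT T (zw_pow R m)) = 0 \/ uhp_zero_free (zslice z (extT T (zw_pow R m))).
Proof.
case=> [h0|/gauss_lucas_uhp].
  by left; apply: (mulrSn_eq0 m); rewrite -deriv_zslice_zw_pow h0 deriv0.
by rewrite deriv_zslice_zw_pow => -[/mulrSn_eq0|/uhp_zero_free_mulrSn]; [left | right].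
Qed.

(* Gauss-Lucas in [w] brings the nonvanishing of [T (z + w)^N] down to every lower power. *)
Lemma symbol_stable_of_nonvanishing n N : (n <= N)%N ->
  (forall w, 0 < Im w -> T (('X + w%:P) ^+ N) != 0) ->
  stable2 (extT T (zw_pow R n)) \/ extT T (zw_pow R n) = 0.
Proof.
move=> nN hN; set F := extT T (zw_pow R n).
have hslice z : 0 < Im z -> zslice z F = 0 \/ uhp_zero_free (zslice z F).
  move=> hz; have : zslice z (extT T (zw_pow R N)) = 0 \/
      uhp_zero_free (zslice z (extT T (zw_pow R N))).
    right => w hw; rewrite -eval2_zslice eval2_zw_pow.
    case: (HT _ (stable1_XaddC_exp N (ltW hw))) => [/stable1E|/eqP]; first exact.
    by rewrite (negbTE (hN w hw)).
  rewrite -(subnK nN) /F; elim: (N - n)%N => [|d IH]; first by [].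
  by rewrite addSn => /zslice_zw_pow_pred /IH.
have [hall|hnall] := classic (forall z w, 0 < Im z -> 0 < Im w -> eval2 F z w != 0).
  left; split => //; apply: contraTneq (hall 'i%C 'i%C ltr01 ltr01) => ->.
  by rewrite /eval2 !horner0 eqxx.
right; apply: poly2_eq0_uhp => w hw; rewrite extT_zw_pow_horner.
have [z0 [w0 [hz0 hw0 he]]] : exists z0 w0, [/\ 0 < Im z0, 0 < Im w0 & eval2 F z0 w0 = 0].
  apply: NNPP => hne; apply: hnall => z w' hz hw'; apply/eqP => he.
  by apply: hne; exists z, w'.
have hz0F : zslice z0 F = 0.
  case: (hslice z0 hz0) => // hzf.
  by have := hzf w0 hw0; rewrite -eval2_zslice he eqxx.
case: (HT _ (stable1_XaddC_exp n (ltW hw))) => [/stable1E hst|//].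
by have := hst z0 hz0; rewrite -eval2_zw_pow eval2_zslice -/F hz0F horner0 eqxx.
Qed.

Lemma preserver_rank_le1 : rank_le1 T ->
  exists (alpha : {linear {poly C} -> C^o}) (P : {poly C}),
    stable1 P /\ forall f, T f = alpha f *: P.
Proof.
move=> hrank; have [[k Tk0]|hT0] := classic (exists k, T 'X^k != 0).
  set P := T 'X^k in Tk0; set d := (size P).-1.
  have Pd0 : P`_d != 0 by rewrite -lead_coefE lead_coef_eq0.
  have /stable1E hP : stable1 P.
    have := HT _ (@stable1_XaddC_exp _ 0 k (lexx _)).
    by rewrite addr0 => -[//|/eqP]; rewrite (negbTE Tk0).
  exists (coefp d \o T), ((P`_d)^-1 *: P); split.
    by apply/stable1E => z /hP hz; rewrite hornerZ mulf_neq0 ?invr_eq0.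
  move=> f /=; have [/eqP|[c ->]] := hrank f 'X^k; first by rewrite (negbTE Tk0).
  by rewrite coefZ scalerA mulrK ?unitfE.
have hX k : T 'X^k = 0 by apply/eqP/negPn/negP => Tk0; apply: hT0; exists k.
exists (coefp 0 \o T), 1; split.
  by apply/stable1E => z _; rewrite hornerC oner_neq0.
move=> f /=; suff -> : T f = 0 by rewrite coef0 scale0r.
rewrite -(coefK f) poly_def linear_sum big1 // => i _.
by rewrite linearZ_LR hX scaler0.
Qed.

Lemma preserver_symbol_stable : ~ rank_le1 T ->
  forall n, stable2 (extT T (zw_pow R n)) \/ extT T (zw_pow R n) = 0.
Proof.
move=> hrank n.
have [g1 [g2 [Tg2 hind]]] : exists g1 g2, T g2 != 0 /\ forall c, T g1 != c *: T g2.
  apply: NNPP => hne; apply: hrank => f g; apply: NNPP => hfg; apply: hne; exists f, g.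
  split; first by apply/eqP => h; apply: hfg; left.
  by move=> c; apply/eqP => h; apply: hfg; right; exists c.
pose N0 := maxn (size g1) (size g2).
apply: (@symbol_stable_of_nonvanishing n (N0 + n)); first exact: leq_addl.
move=> w hw; apply/eqP => hT.
have s1 : (size g1 <= (N0 + n).+1)%N by apply/leqW/(leq_trans (leq_maxl _ _) (leq_addr _ _)).
have s2 : (size g2 <= (N0 + n).+1)%N by apply/leqW/(leq_trans (leq_maxr _ _) (leq_addr _ _)).
case: (T_proportional (T_low_degree_stable hw hT) _ _ s1 s2) => [/eqP|[c /eqP]].
  by rewrite (negbTE Tg2).
by rewrite (negbTE (hind c)).
Qed.

End Necessity.

Theorem mainTheorem5 (R : realType) (T : {linear {poly R[i]} -> {poly R[i]}}) :
  (forall f : {poly R[i]}, stable1 f -> stable1 (T f) \/ T f = 0) <->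
  (exists (alpha : {linear {poly R[i]} -> R[i]^o}) (P : {poly R[i]}),
       stable1 P /\ forall f, T f = alpha f *: P)
  \/ (forall n : nat, stable2 (extT T (zw_pow R n)) \/ extT T (zw_pow R n) = 0).
Proof.
split=> [HT | [[alpha [P [/stable1E hP hT]]] | hsym]].
- have [/(preserver_rank_le1 HT) | /(preserver_symbol_stable HT)] := classic (rank_le1 T).
    by left.
  by right.
- move=> f _; rewrite hT; have [->|a0] := eqVneq (alpha f) 0; first by right; rewrite scale0r.
  by left; apply/stable1E => z /hP hz; rewrite hornerZ mulf_neq0.
- exact: symbol_stable_preserves_stability.
Qed.
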